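(* Fix a nonempty $A\subseteq S$ and $w\in A$, and let $E_0$ be the event $\{\tau_{\mathcal E_N^w}=\tau_{\mathcal E_N(A)}\}$. Let $x,y\in S$ be distinct with $r(x,y)+r(y,x)>0$. Then there exists $C>0$, independent of $N$ and $i$, such that for all $i\in\{1,\dots,N-1\}$, $$\Big|\mathbb P_{\zeta_i^{x,y}}[E_0]-\frac{r(x,y)}{r(x,y)+r(y,x)}\mathbb P_{\zeta_{i+1}^{x,y}}[E_0]-\frac{r(y,x)}{r(x,y)+r(y,x)}\mathbb P_{\zeta_{i-1}^{x,y}}[E_0]\Big|\le C\frac{d_NN}{i(N-i)}.$$
   Context: $S$ is finite; $r:S\times S\to[0,\infty)$, $r(x,x)=0$, are the rates of an irreducible continuous-time Markov chain on $S$. $\mathcal H_N=\{\eta\in\{0,1,2,\dots\}^S:\sum_x\eta_x=N\}$; $\sigma^{x,y}\eta$ moves one particle from $x$ to $y$ (if $\eta_x\ge1$; else $\sigma^{x,y}\eta=\eta$). With $d_N>0$, $d_N\to0$, the inclusion process is the Markov chain on $\mathcal H_N$ with generator $(\mathcal L_NF)(\eta)=\sum_{x\ne y}\eta_x(d_N+\eta_y)r(x,y)\{F(\sigma^{x,y}\eta)-F(\eta)\}$; $\mathbb P_\eta$ its law from $\eta$; $\tau_{\mathcal C}$ the hitting time of $\mathcal C\subseteq\mathcal H_N$. $\xi_N^z$: all $N$ particles at $z$; $\mathcal E_N^z=\{\xi_N^z\}$, $\mathcal E_N(A)=\bigcup_{z\in A}\mathcal E_N^z$. For $0\le i\le N$,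 $\zeta_i^{x,y}$ is the configuration with $N-i$ particles at $x$, $i$ at $y$, and none elsewhere. *)

From HB Require Import structures.
From mathcomp Require Import all_boot all_order all_algebra.
From mathcomp Require Import all_classical all_reals all_analysis.
Set Implicit Arguments. Unset Strict Implicit. Unset Printing Implicit Defensive.
Import Order.TTheory GRing.Theory Num.Theory.
Import numFieldNormedType.Exports.
Local Open Scope ring_scope.

Section Inclusion.
Variables (R : realType) (S : finType).

Definition irreducible_rates (r : S -> S -> R) : Prop :=
  forall a b : S, connect (fun u v => 0 < r u v) a b.

Definition sigma (x y : S) (eta : {ffun S -> nat}) : {ffun S -> nat} :=
  if (0 < eta x)%N then
    [ffun z => if z == x then (eta z).-1 else if z == y then (eta z).+1 else eta z]
  else eta.

Definition xi (N : nat) (z : S) : {ffun S -> nat} :=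
  [ffun u => if u == z then N else 0%N].

Definition zeta (N i : nat) (x y : S) : {ffun S -> nat} :=
  [ffun u => if u == x then (N - i)%N else if u == y then i else 0%N].

Definition rate (r : S -> S -> R) (dN : R) (eta : {ffun S -> nat}) (x y : S) : R :=
  (eta x)%:R * (dN + (eta y)%:R) * r x y.

Definition lam (r : S -> S -> R) (dN : R) (eta : {ffun S -> nat}) : R :=
  \sum_(x : S) \sum_(y : S | y != x) rate r dN eta x y.

Definition inE (N : nat) (A : {set S}) (eta : {ffun S -> nat}) : bool :=
  [exists z in A, eta == xi N z].

(* hitP_n eta = P_eta[ tau_{E(A)} <= (n-th jump) and the first visit to E(A) is at xi^w ],
   computed by first-step analysis on the embedded jump chain. *)
Fixpoint hitP_n (r : S -> S -> R) (dN : R) (N : nat) (A : {set S}) (w : S)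
    (n : nat) (eta : {ffun S -> nat}) : R :=
  if eta == xi N w then 1
  else if inE N A eta then 0
  else match n with
       | 0%N => 0
       | n'.+1 => \sum_(x : S) \sum_(y : S | y != x)
                    (rate r dN eta x y / lam r dN eta) *
                    hitP_n r dN N A w n' (sigma x y eta)
       end.

(* P_eta[ tau_{E_N^w} = tau_{E_N(A)} ] (with tau_{E_N(A)} < oo) *)
Definition hitP (r : S -> S -> R) (dN : R) (N : nat) (A : {set S}) (w : S)
    (eta : {ffun S -> nat}) : R :=
  limn (fun n => hitP_n r dN N A w n eta).

End Inclusion.

From Pilot Require Import Defs.
From HB Require Import structures.
From mathcomp Require Import all_boot all_order all_algebra.
From mathcomp Require Import all_classical all_reals all_analysis.
From mathcomp Require Import ring lra zify.
Set Implicit Arguments. Unset Strict Implicit. Unset Printing Implicit Defensive.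
Import Order.TTheory GRing.Theory Num.Theory.
Import numFieldNormedType.Exports.
Local Open Scope classical_set_scope.
Local Open Scope ring_scope.

(* From zeta_i the jump chain moves to zeta_(i+1) at rate (N-i)(d_N+i) r(x,y) and
   to zeta_(i-1) at rate i(d_N+N-i) r(y,x); every other move carries a particle
   from x or y onto an empty site, so the remaining rate Q is at most
   d_N N sum r.  The total rate is at least i(N-i)(r(x,y)+r(y,x)).  First-step
   analysis therefore reproduces the two-site recursion up to two errors: the
   imbalance d_N r(x,y) r(y,x)(N-2i) between the two main jump probabilities and
   the weights r(x,y)/(r(x,y)+r(y,x)), r(y,x)/(r(x,y)+r(y,x)), and the mass Q
   that escapes to other configurations.  Both are O(d_N N / (i(N-i))). *)

Section HittingProbability.
Variables (R : realType) (S : finType) (r : S -> S -> R) (dN : R) (N : nat)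
  (A : {set S}) (w : S).
Hypotheses (r_ge0 : forall a b, 0 <= r a b) (dN_ge0 : 0 <= dN).

Local Notation jump_prob eta a b := (rate r dN eta a b / lam r dN eta).
Local Notation h := (hitP_n r dN N A w).
Local Notation H := (hitP r dN N A w).

Lemma rate_ge0 eta a b : 0 <= rate r dN eta a b.
Proof. by rewrite /rate !mulr_ge0 ?addr_ge0. Qed.

Lemma lam_ge0 eta : 0 <= lam r dN eta.
Proof. by do 2!(apply: sumr_ge0 => ? _); exact: rate_ge0. Qed.

Lemma jump_prob_ge0 eta a b : 0 <= jump_prob eta a b.
Proof. by rewrite divr_ge0 ?rate_ge0 ?lam_ge0. Qed.

Lemma sum_jump_prob_le1 eta : \sum_a \sum_(b | b != a) jump_prob eta a b <= 1.
Proof.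
under eq_bigr do rewrite -big_distrl; rewrite -big_distrl -/(lam r dN eta) /=.
have [->|lam_neq0] := eqVneq (lam r dN eta) 0; first by rewrite invr0 mulr0.
by rewrite divff.
Qed.

Lemma hitP_n_bounded n eta : 0 <= h n eta <= 1.
Proof.
elim: n eta => [|n IH] eta /=; case: ifP => _; rewrite ?lexx ?ler01 //.
  by case: ifP; rewrite ?lexx ?ler01.
case: ifP => _; rewrite ?lexx ?ler01 //; apply/andP; split.
  apply: sumr_ge0 => a _; apply: sumr_ge0 => b _.
  by rewrite mulr_ge0 ?jump_prob_ge0 //; case/andP: (IH (sigma a b eta)).
apply: le_trans (sum_jump_prob_le1 eta); apply: ler_sum => a _; apply: ler_sum => b _.
by rewrite ler_piMr ?jump_prob_ge0 //; case/andP: (IH (sigma a b eta)).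
Qed.

Lemma hitP_n_le_succ n eta : h n eta <= h n.+1 eta.
Proof.
elim: n eta => [|n IH] eta /=; case: ifP => // _; case: ifP => // _.
  apply: sumr_ge0 => a _; apply: sumr_ge0 => b _.
  by rewrite mulr_ge0 ?jump_prob_ge0 //; case/andP: (hitP_n_bounded 0 (sigma a b eta)).
by apply: ler_sum => a _; apply: ler_sum => b _; rewrite ler_wpM2l ?jump_prob_ge0.
Qed.

Lemma hitP_n_cvg eta : h n eta @[n --> \oo] --> H eta.
Proof.
apply: nondecreasing_is_cvgn; first by apply/nondecreasing_seqP => n; exact: hitP_n_le_succ.
by exists 1 => _ [n _ <-]; case/andP: (hitP_n_bounded n eta).
Qed.

Lemma hitP_bounded eta : 0 <= H eta <= 1.
Proof.
by apply/andP; split; [apply: limr_ge | apply: limr_le];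
  try exact: hitP_n_cvg; apply: nearW => n; case/andP: (hitP_n_bounded n eta).
Qed.

Lemma hitP_first_step eta : eta != xi N w -> ~~ Defs.inE N A eta ->
  H eta = \sum_a \sum_(b | b != a) jump_prob eta a b * H (sigma a b eta).
Proof.
move=> /negbTE eta_neq_xi /negbTE eta_notin.
rewrite /hitP; apply: cvg_lim; first exact: Rhausdorff.
rewrite -(cvg_shiftS (h ^~ eta) (nbhs (_ : R))).
under eq_cvg do rewrite /= eta_neq_xi eta_notin.
apply: cvg_big => [|a _]; first exact: add_continuous.
apply: cvg_big => [|b _]; first exact: add_continuous.
by apply: cvgMr; exact: hitP_n_cvg.
Qed.

Lemma sum_jump_prob_hitP_le (P : pred (S * S)) eta :
  0 <= \sum_(p | P p) jump_prob eta p.1 p.2 * H (sigma p.1 p.2 eta)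
    <= (\sum_(p | P p) rate r dN eta p.1 p.2) / lam r dN eta.
Proof.
have H_bounded p := hitP_bounded (sigma p.1 p.2 eta).
rewrite big_distrl /=; apply/andP; split.
  apply: sumr_ge0 => p _; case/andP: (H_bounded p) => H_ge0 _.
  by rewrite mulr_ge0 ?jump_prob_ge0.
apply: ler_sum => p _; case/andP: (H_bounded p) => _ H_le1.
by rewrite ler_piMr ?jump_prob_ge0.
Qed.

End HittingProbability.

Lemma first_step_defect_le (R : realFieldType) (al be Q L a b H1 H2 X : R) :
  L = al + be + Q -> 0 < L -> 0 <= a -> 0 <= b -> 0 < a + b ->
  0 <= H1 <= 1 -> 0 <= H2 <= 1 -> 0 <= X <= Q / L ->
  `|al / L * H1 + be / L * H2 + X - a / (a + b) * H1 - b / (a + b) * H2|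
    <= `|al * b - a * be| / (L * (a + b)) + Q / L.
Proof.
move=> L_def L_gt0 a_ge0 b_ge0 s_gt0 /andP[H1_ge0 H1_le1] /andP[H2_ge0 H2_le1].
set q := Q / L => /andP[X_ge0 X_le_q].
set t := (a * H1 + b * H2) / (a + b).
have t_ge0 : 0 <= t by rewrite divr_ge0 ?addr_ge0 ?mulr_ge0 // ltW.
have t_le1 : t <= 1 by rewrite ler_pdivrMr // mul1r; nra.
have q_ge0 : 0 <= q by apply: le_trans X_le_q.
(* The jump probabilities exceed the target weights by (al b - a be)/(L(a+b)) in
   opposite directions, and together fall short of them by q = Q/L. *)
have -> : al / L * H1 + be / L * H2 + X - a / (a + b) * H1 - b / (a + b) * H2
    = (al * b - a * be) / (L * (a + b)) * (H1 - H2) + (X - q * t).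
  rewrite /q /t L_def; field.
  by rewrite -L_def !gt_eqF.
apply: le_trans (ler_normD _ _) (lerD _ _).
  rewrite normrM normf_div (gtr0_norm (mulr_gt0 L_gt0 s_gt0)).
  rewrite ler_piMr ?divr_ge0 ?mulr_ge0 ?(ltW L_gt0) ?(ltW s_gt0) //.
  by rewrite ler_norml; apply/andP; split; lra.
by rewrite ler_norml; apply/andP; split; nra.
Qed.

Lemma two_site_total_rate_ge (R : realFieldType) (a b d m k Q L : R) :
  0 <= a -> 0 <= b -> 0 <= d -> 1 <= m -> 1 <= k -> 0 <= Q ->
  L = m * (d + k) * a + k * (d + m) * b + Q -> k * m * (a + b) <= L.
Proof.
move=> a_ge0 b_ge0 d_ge0 m_ge1 k_ge1 Q_ge0 ->.
have : 0 <= d * (m * a + k * b) by rewrite mulr_ge0 ?addr_ge0 ?mulr_ge0 //; lra.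
nra.
Qed.

Lemma two_site_defect_le (R : realFieldType) (a b d m k T Q L : R) :
  0 <= a -> 0 <= b -> 0 < a + b -> 0 <= d -> 1 <= m -> 1 <= k -> 0 <= T ->
  0 <= Q <= d * (m + k) * T -> L = m * (d + k) * a + k * (d + m) * b + Q ->
  `|m * (d + k) * a * b - a * (k * (d + m) * b)| / (L * (a + b)) + Q / L
    <= (1 + T / (a + b)) * (d * (m + k) / (k * m)).
Proof.
move=> a_ge0 b_ge0 s_gt0 d_ge0 m_ge1 k_ge1 T_ge0 /andP[Q_ge0 Q_le] L_def.
have L_ge := two_site_total_rate_ge a_ge0 b_ge0 d_ge0 m_ge1 k_ge1 Q_ge0 L_def.
set s := a + b in s_gt0 L_ge *; set e := d * (m + k) / (k * m).
have km_gt0 : 0 < k * m by apply: mulr_gt0; lra.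
have e_ge0 : 0 <= e by rewrite divr_ge0 ?mulr_ge0 ?(ltW km_gt0) //; lra.
have e_km : e * (k * m) = d * (m + k) by rewrite /e mulfVK ?gt_eqF.
have L_gt0 : 0 < L by apply: lt_le_trans L_ge; rewrite mulr_gt0.
have D_le : `|m * (d + k) * a * b - a * (k * (d + m) * b)| <= s ^+ 2 * (d * (m + k)).
  have -> : m * (d + k) * a * b - a * (k * (d + m) * b) = a * b * (d * (m - k)) by ring.
  have ab_le : a * b <= s ^+ 2.
    rewrite /s sqrrD -addrA ler_wpDl ?sqr_ge0 // ler_wpDr ?sqr_ge0 //.
    by rewrite mulr2n ler_wpDr ?mulr_ge0.
  rewrite normrM ger0_norm ?mulr_ge0 // ler_pM ?mulr_ge0 //.
  by rewrite normrM ger0_norm // ler_wpM2l // ler_norml; apply/andP; split; lra.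
rewrite mulrDl mul1r; apply: lerD.
  rewrite ler_pdivrMr ?mulr_gt0 //; apply: le_trans D_le _; rewrite -e_km.
  have : 0 <= e * s by rewrite mulr_ge0 // ltW.
  nra.
rewrite ler_pdivrMr //.
have c_ge0 : 0 <= T / s * e by rewrite mulr_ge0 // divr_ge0 // ltW.
have c_kms : T / s * e * (k * m * s) = d * (m + k) * T.
  by rewrite -e_km; field; rewrite gt_eqF.
nra.
Qed.

Lemma two_site_first_step_le (R : realFieldType) (a b d m k T Q L H1 H2 X : R) :
  0 <= a -> 0 <= b -> 0 < a + b -> 0 <= d -> 1 <= m -> 1 <= k -> 0 <= T ->
  0 <= Q <= d * (m + k) * T -> L = m * (d + k) * a + k * (d + m) * b + Q ->
  0 <= H1 <= 1 -> 0 <= H2 <= 1 -> 0 <= X <= Q / L ->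
  `|m * (d + k) * a / L * H1 + k * (d + m) * b / L * H2 + X
      - a / (a + b) * H1 - b / (a + b) * H2|
    <= (1 + T / (a + b)) * (d * (m + k) / (k * m)).
Proof.
move=> a_ge0 b_ge0 s_gt0 d_ge0 m_ge1 k_ge1 T_ge0 Q_bounds L_def H1_bounds H2_bounds X_bounds.
have /andP[Q_ge0 _] := Q_bounds.
have L_gt0 : 0 < L.
  apply: lt_le_trans (two_site_total_rate_ge a_ge0 b_ge0 d_ge0 m_ge1 k_ge1 Q_ge0 L_def).
  by rewrite !mulr_gt0 //; lra.
apply: le_trans (two_site_defect_le a_ge0 b_ge0 s_gt0 d_ge0 m_ge1 k_ge1 T_ge0 Q_bounds L_def).
exact: first_step_defect_le.
Qed.

Section TwoSiteConfigurations.
Variables (S : finType) (x y : S).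
Hypothesis xy : x != y.

Definition other_pair (p : S * S) := [&& p.2 != p.1, p != (x, y) & p != (y, x)].

Lemma sum_offdiag_split (V : nmodType) (F : S -> S -> V) :
  \sum_a \sum_(b | b != a) F a b = F x y + F y x + \sum_(p | other_pair p) F p.1 p.2.
Proof.
have yx : y != x by rewrite eq_sym.
rewrite pair_big_dep (bigD1 (x, y)) //= (bigD1 (y, x)) /=; last first.
  by rewrite xy; apply: contra xy => /eqP[->].
by rewrite addrA; congr (_ + _); apply: eq_bigl => p; rewrite /other_pair andbA.
Qed.

Variables (N i : nat).
Hypothesis i_interior : (0 < i < N)%N.
Local Notation eta := (zeta N i x y).

Lemma sigma_zeta_xy : sigma x y eta = zeta N i.+1 x y.
Proof.
have /andP[_ i_lt] := i_interior.
rewrite /sigma ffunE eqxx subn_gt0 i_lt; apply/ffunP => z; rewrite !ffunE.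
by case: eqVneq => [_|_] /=; [lia | case: eqVneq].
Qed.

Lemma sigma_zeta_yx : sigma y x eta = zeta N i.-1 x y.
Proof.
have /andP[i_gt0 i_lt] := i_interior.
rewrite /sigma ffunE eq_sym (negbTE xy) eqxx i_gt0.
apply/ffunP => z; rewrite !ffunE.
case: (eqVneq z y) => [->|_]; first by rewrite eq_sym (negbTE xy).
by case: eqVneq => _ //; lia.
Qed.

Lemma zeta_neq_xi z : eta != xi N z.
Proof.
have /andP[i_gt0 i_lt] := i_interior.
apply/negP => /eqP/ffunP/(_ x).
by rewrite !ffunE eqxx; case: (x == z); lia.
Qed.

Lemma zeta_notin_E A : ~~ Defs.inE N A eta.
Proof.
by apply/existsP => -[z /andP[_ /eqP eta_xi]]; move: (zeta_neq_xi z); rewrite eta_xi eqxx.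
Qed.

Variables (R : realType) (r : S -> S -> R) (dN : R).

Lemma rate_zeta_xy : rate r dN eta x y = (N - i)%:R * (dN + i%:R) * r x y.
Proof. by rewrite /rate !ffunE eqxx eq_sym (negbTE xy) eqxx. Qed.

Lemma rate_zeta_yx : rate r dN eta y x = i%:R * (dN + (N - i)%:R) * r y x.
Proof. by rewrite /rate !ffunE eqxx eq_sym (negbTE xy) eqxx. Qed.

Lemma rate_zeta_other_le p : (forall a b, 0 <= r a b) -> 0 <= dN ->
  other_pair p -> rate r dN eta p.1 p.2 <= dN * N%:R * r p.1 p.2.
Proof.
move=> r_ge0 dN_ge0; case: p => u v /and3P[/= vu uv_xy uv_yx]; rewrite /rate !ffunE.
have [v_xy|v_nxy] := boolP ((v == x) || (v == y)).
  have [ux uy] : u != x /\ u != y.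
    case/orP: v_xy => /eqP v_def; subst v.
      by split; [rewrite eq_sym | apply: contraNneq uv_yx => ->].
    by split; [apply: contraNneq uv_xy => -> | rewrite eq_sym].
  by rewrite (negbTE ux) (negbTE uy) !mul0r mulr_ge0 ?mulr_ge0.
rewrite negb_or in v_nxy; case/andP: v_nxy => /negbTE -> /negbTE -> /[!addr0].
rewrite [dN * _]mulrC ler_wpM2r // ler_wpM2r // ler_nat.
have /andP[_ /ltnW i_le] := i_interior.
by case: ifP => _; [exact: leq_subr | case: ifP].
Qed.

End TwoSiteConfigurations.

Theorem lemma4p7 (R : realType) (S : finType) (r : S -> S -> R)
  (r_ge0 : forall a b, 0 <= r a b) (r_diag : forall a, r a a = 0)
  (r_irr : irreducible_rates r)
  (d : nat -> R) (d_pos : forall N, 0 < d N) (d_lim : d @ \oo --> 0)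
  (A : {set S}) (A_ne : A != finset.set0) (w : S) (wA : w \in A)
  (x y : S) (xy : x != y) (rxy : 0 < r x y + r y x) :
  exists C : R, 0 < C /\
    forall (N i : nat), (1 <= i)%N -> (i <= N - 1)%N ->
      `| hitP r (d N) N A w (zeta N i x y)
         - r x y / (r x y + r y x) * hitP r (d N) N A w (zeta N i.+1 x y)
         - r y x / (r x y + r y x) * hitP r (d N) N A w (zeta N i.-1 x y) |
      <= C * (d N * N%:R / (i%:R * (N - i)%:R)).
Proof.
set a := r x y; set b := r y x; set T := \sum_(p | other_pair x y p) r p.1 p.2.
have T_ge0 : 0 <= T by rewrite sumr_ge0.
exists (1 + T / (a + b)); split; first by have := divr_ge0 T_ge0 (ltW rxy); lra.
move=> N i i_ge1 i_le; have i_interior : (0 < i < N)%N by lia.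
have dN_ge0 := ltW (d_pos N).
set eta := zeta N i x y.
set Q := \sum_(p | other_pair x y p) rate r (d N) eta p.1 p.2.
have lam_eta : lam r (d N) eta
    = (N - i)%:R * (d N + i%:R) * a + i%:R * (d N + (N - i)%:R) * b + Q.
  by rewrite /lam (sum_offdiag_split xy) rate_zeta_xy // rate_zeta_yx.
have Q_bounds : 0 <= Q <= d N * N%:R * T.
  apply/andP; split; first by apply: sumr_ge0 => p _; exact: rate_ge0.
  by rewrite big_distrr; apply: ler_sum => p; exact: rate_zeta_other_le.
rewrite hitP_first_step ?zeta_neq_xi ?zeta_notin_E // (sum_offdiag_split xy).
rewrite sigma_zeta_xy // sigma_zeta_yx // rate_zeta_xy // rate_zeta_yx //.
have N_split : N%:R = (N - i)%:R + i%:R :> R by rewrite -natrD subnK // ltnW; lia.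
rewrite N_split in Q_bounds *.
apply: (two_site_first_step_le (Q := Q)) => //; rewrite ?ler1n //.
- by rewrite subn_gt0; case/andP: i_interior.
- exact: hitP_bounded.
- exact: hitP_bounded.
- exact: sum_jump_prob_hitP_le.
Qed.
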